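(* Let $(X,\tau)$ be a locally convex space and let $T\in\mathcal{M}(X)$ be locally-NI. Then $[\varphi_{T}=c]=[\varphi_{T}\le c]=[\psi_{T}=c]$, and this set is the unique identifiable extension of $T$.
   Context: $(X,\tau)$ is a non-trivial Hausdorff locally convex space, $X^*$ its dual with weak-star topology $\omega^*$, $Z=X\times X^*$ with topology $\tau\times\omega^*$, $c(x,x^* )=\langle x,x^*\rangle$. Operators are identified with their graphs; $D(T)$ is the domain; $T|_V$ has graph $\operatorname{Graph}T\cap(V\times X^* )$. $\varphi_{T}(x,x^{*})=\sup\{\langle x,u^{*}\rangle+\langle u,x^{*}\rangle-\langle u,u^{*}\rangle\mid(u,u^{*})\in T\}$ ($\sup\emptyset=-\infty$); $\psi_T$ is the $\tau\times\omega^*$-lsc convex hull of $c+\iota_{\operatorname{Graph}T}$; $[f\le g]=\{z\mid f(z)\le g(z)\}$, etc. $\mathcal M(X)$: monotone operators with non-empty graph. $T$ is $V$-NI if $\varphi_{T|_V}\ge c$ on $V\times X^*$, and locally-NI if it is $V$-NI for every open convex $V$ with $V\cap D(T)\ne\emptyset$. $V$ identifies $S$ if $[\varphi_{S|_V}\le c]\cap(V\times X^* )\subset\operatorname{Graph}S$; $S$ is identifiable if every open convex $V$ with $V\cap D(S)\ne\emptyset$ identifies $S$. An extension of $T$ is an operator whose graph contains $\operatorname{Graph}T$. *)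

From HB Require Import structures.
From mathcomp Require Import all_boot all_order all_algebra.
From mathcomp Require Import all_classical all_reals.
From mathcomp Require Import topology normedtype tvs ereal.
Set Implicit Arguments. Unset Strict Implicit. Unset Printing Implicit Defensive.
Import Order.TTheory GRing.Theory Num.Theory.
Local Open Scope classical_set_scope.
Local Open Scope ring_scope.

(* X : tvsType R is a real locally convex topological vector space.
   Elements x^* of the dual X^* are represented as functions X -> R that are
   linear and (tau-)continuous; Z = X * X^* is represented inside
   X * (X -> R), restricted to pairs whose second component is in the dual. *)

Section Defs.
Context {R : realType} {X : tvsType R}.

Definition dual : set (X -> R) :=
  [set f | (forall (a : R) (x y : X), f (a *: x + y) = a * f x + f y)
           /\ continuous (f : X -> R^o)].

Definition Zd : set (X * (X -> R)) := [set z | dual z.2].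

Definition coupling (z : X * (X -> R)) : R := z.2 z.1.

(* an operator is identified with its graph, a subset of X x X^* *)
Definition operator (T : set (X * (X -> R))) : Prop := T `<=` Zd.

Definition dom (T : set (X * (X -> R))) : set X :=
  [set x | exists xs, T (x, xs)].

Definition restr (T : set (X * (X -> R))) (V : set X) : set (X * (X -> R)) :=
  [set z | T z /\ V z.1].

Definition monotone_op (T : set (X * (X -> R))) : Prop :=
  forall z w, T z -> T w ->
    0 <= z.2 z.1 - z.2 w.1 - w.2 z.1 + w.2 w.1.

Definition MX (T : set (X * (X -> R))) : Prop :=
  operator T /\ T !=set0 /\ monotone_op T.

(* Fitzpatrick function; ereal_sup set0 = -oo *)
Definition phi (T : set (X * (X -> R))) (z : X * (X -> R)) : \bar R :=
  ereal_sup [set ((u.2 z.1 + z.2 u.1 - u.2 u.1)%:E) | u in T].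

Definition convex_set_X (V : set X) : Prop :=
  forall x y, V x -> V y -> forall t : R, 0 <= t <= 1 ->
    V (t *: x + (1 - t) *: y).

Definition zcomb (t : R) (z w : X * (X -> R)) : X * (X -> R) :=
  (t *: z.1 + (1 - t) *: w.1, fun u => t * z.2 u + (1 - t) * w.2 u).

(* convexity of an extended-real function on Z (epigraph convexity) *)
Definition convex_fun_Z (f : X * (X -> R) -> \bar R) : Prop :=
  forall z w, Zd z -> Zd w -> forall a b : R,
    (f z <= a%:E)%E -> (f w <= b%:E)%E -> forall t : R, 0 <= t <= 1 ->
    (f (zcomb t z w) <= (t * a + (1 - t) * b)%:E)%E.

(* lower semicontinuity w.r.t. tau x weak-star on Z:
   a basic weak-star neighbourhood of x^* is
   {y^* | |<a, y^* - x^*>| < eps for all a in a finite list} *)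
Definition lsc_Z (f : X * (X -> R) -> \bar R) : Prop :=
  forall z, Zd z -> forall r : R, (r%:E < f z)%E ->
    exists U, nbhs z.1 U /\
    exists (xs : seq X) (eps : R), 0 < eps /\
      forall y g, U y -> dual g ->
        (forall a, a \in xs -> `|g a - z.2 a| < eps) ->
        (r%:E < f (y, g))%E.

Definition c_plus_ind (T : set (X * (X -> R))) (z : X * (X -> R)) : \bar R :=
  if `[< T z >] then (coupling z)%:E else +oo%E.

(* psi_T : the tau x w*-lsc convex hull of c + iota_{Graph T},
   i.e. the pointwise supremum of all lsc convex minorants on Z *)
Definition psi (T : set (X * (X -> R))) (z : X * (X -> R)) : \bar R :=
  ereal_sup [set g z | g in [set g : X * (X -> R) -> \bar R |
     lsc_Z g /\ convex_fun_Z g /\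
     (forall w, Zd w -> (g w <= c_plus_ind T w)%E)]].

Definition open_convex (V : set X) : Prop := open V /\ convex_set_X V.

Definition V_NI (T : set (X * (X -> R))) (V : set X) : Prop :=
  forall z, Zd z -> V z.1 -> ((coupling z)%:E <= phi (restr T V) z)%E.

Definition locally_NI (T : set (X * (X -> R))) : Prop :=
  forall V, open_convex V -> V `&` dom T !=set0 -> V_NI T V.

Definition identifies (V : set X) (S : set (X * (X -> R))) : Prop :=
  [set z | Zd z /\ V z.1 /\ (phi (restr S V) z <= (coupling z)%:E)%E]
    `<=` S.

Definition identifiable (S : set (X * (X -> R))) : Prop :=
  forall V, open_convex V -> V `&` dom S !=set0 -> identifies V S.

Definition set_phi_eq_c (T : set (X * (X -> R))) : set (X * (X -> R)) :=
  [set z | Zd z /\ phi T z = (coupling z)%:E].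
Definition set_phi_le_c (T : set (X * (X -> R))) : set (X * (X -> R)) :=
  [set z | Zd z /\ (phi T z <= (coupling z)%:E)%E].
Definition set_psi_eq_c (T : set (X * (X -> R))) : set (X * (X -> R)) :=
  [set z | Zd z /\ psi T z = (coupling z)%:E].

End Defs.

(* Let M := [phi_T <= c]; a point of Z lies in M iff it is monotonically related
   to every point of T.  If two points z, w of M were not related, the gap of
   their midpoint with every point of T would be at least a fixed positive
   number, which forces phi_T < c there and contradicts NI; so M is monotone.
   The same convex-combination argument inside an open convex V shows that M is
   identifiable, once a Hahn-Banach separation shows that every open convex set
   meeting dom M meets dom T.  An identifiable monotone extension S of T lies
   in M, and V = X identifies M inside S, so S = M.  Finally phi_T <= psi_T
   always, while psi_T <= c on M: otherwise some lsc convex minorant g of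
   c + iota_T exceeds c at z, and separating (in a finite-dimensional image of
   Z given by lower semicontinuity) an open box under g from the epigraph of g
   yields a point w of Z whose combinations with z contradict NI. *)

From mathcomp Require Import all_boot all_order all_algebra.
From mathcomp Require Import all_classical all_reals.
From mathcomp Require Import topology normedtype tvs ereal.
From mathcomp Require Import ring lra.
Set Implicit Arguments. Unset Strict Implicit. Unset Printing Implicit Defensive.
Import Order.TTheory GRing.Theory Num.Theory.
Local Open Scope classical_set_scope.
Local Open Scope ring_scope.

Section RealInequalities.
Context {R : realType}.

Lemma convex_comb_lt (a b m t : R) : 0 <= t <= 1 -> a < m -> b < m ->
  t * a + (1 - t) * b < m.
Proof.
move=> /andP[t0 t1] am bm.
have [->|tp] := eqVneq t 0; first by rewrite mul0r add0r subr0 mul1r.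
have t0' : 0 < t by rewrite lt_neqAle eq_sym tp.
have h1 : t * a < t * m by rewrite ltr_pM2l.
have h2 : (1 - t) * b <= (1 - t) * m by apply: ler_wpM2l; [rewrite subr_ge0|exact: ltW].
lra.
Qed.

Lemma norm_convex_comb_le (a b t : R) : 0 <= t <= 1 ->
  `|t * a + (1 - t) * b| <= t * `|a| + (1 - t) * `|b|.
Proof.
move=> /andP[t0 t1]; apply: le_trans (ler_normD _ _) _.
by rewrite !normrM (ger0_norm t0) (ger0_norm (_ : 0 <= 1 - t)) ?subr_ge0.
Qed.

Lemma ge0_of_ray_bounded (A B l : R) :
  (forall t : R, 0 <= t -> A - t * l <= B) -> 0 <= l.
Proof.
move=> h; rewrite leNgt; apply/negP => l0.
have c0 : 0 <= (`|B - A| + 1) / - l.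
  by apply: divr_ge0; [exact: addr_ge0 (normr_ge0 _) ler01|rewrite oppr_ge0 ltW].
have := h _ c0; rewrite (_ : _ * l = - (`|B - A| + 1)); last by field; rewrite lt_eqF.
by have := ler_norm (B - A); lra.
Qed.

End RealInequalities.

Section LinearForm.
Context {R : realType} {E : lmodType R}.
Implicit Types (L : E -> R) (x y : E).

Definition linear_form L := forall (a : R) x y, L (a *: x + y) = a * L x + L y.

Lemma linear_formD L x y : linear_form L -> L (x + y) = L x + L y.
Proof. by move=> hL; have := hL 1 x y; rewrite scale1r mul1r. Qed.

Lemma linear_form0 L : linear_form L -> L 0 = 0.
Proof. by move=> hL; have := linear_formD 0 0 hL; rewrite addr0; lra. Qed.

Lemma linear_formZ L (a : R) x : linear_form L -> L (a *: x) = a * L x.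
Proof. by move=> hL; have := hL a x 0; rewrite (linear_form0 hL) !addr0. Qed.

Lemma linear_formN L x : linear_form L -> L (- x) = - L x.
Proof. by move=> hL; rewrite -scaleN1r linear_formZ // mulN1r. Qed.

Lemma linear_formB L x y : linear_form L -> L (x - y) = L x - L y.
Proof. by move=> hL; rewrite linear_formD // linear_formN. Qed.

Lemma linear_form_comb L1 L2 (a b : R) : linear_form L1 -> linear_form L2 ->
  linear_form (fun x => a * L1 x + b * L2 x).
Proof. by move=> h1 h2 t x y; rewrite h1 h2; ring. Qed.

Definition is_convex (W : set E) := forall x y, W x -> W y ->
  forall t : R, 0 <= t <= 1 -> W (t *: x + (1 - t) *: y).

Lemma convex_comb_addr (a b w : E) (t : R) :
  t *: (a + w) + (1 - t) *: (b + w) = t *: a + (1 - t) *: b + w.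
Proof. by rewrite !scalerDr addrACA -scalerDl subrKC scale1r. Qed.

Lemma convex_comb_subr (a b c d : E) (t : R) :
  t *: (a - c) + (1 - t) *: (b - d) = t *: a + (1 - t) *: b - (t *: c + (1 - t) *: d).
Proof. by rewrite !scalerBr opprD addrACA. Qed.

Lemma convex_comb_affine a x y (k t : R) :
  t *: (a + k *: x) + (1 - t) *: (a + k *: y) = a + k *: (t *: x + (1 - t) *: y).
Proof.
rewrite !scalerDr addrACA -scalerDl subrKC scale1r !scalerA.
by rewrite [t * k]mulrC [(1 - t) * k]mulrC -!scalerA.
Qed.

End LinearForm.

(** * Hahn-Banach separation in real vector spaces *)

Section HahnBanach.
Context {R : realType} {E : lmodType R}.
Implicit Types (p q : E -> R) (x y : E).

Lemma inf_image_le {T : Type} (A : set T) (F : T -> R) (b : R) a :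
  (forall t, A t -> b <= F t) -> A a -> inf [set F t | t in A] <= F a.
Proof.
move=> hb Aa; apply: ge_inf; last by exists a.
by exists b => _ [t At <-]; exact: hb.
Qed.

Lemma le_inf_image {T : Type} (A : set T) (F : T -> R) (b : R) :
  A !=set0 -> (forall t, A t -> b <= F t) -> b <= inf [set F t | t in A].
Proof.
move=> [a Aa] hb; apply: lb_le_inf; first by exists (F a), a.
by move=> _ [t At <-]; exact: hb.
Qed.

Definition sublinear p := (forall x y, p (x + y) <= p x + p y) /\
  (forall (t : R) x, 0 < t -> p (t *: x) = t * p x).

Lemma sublinear0 p : sublinear p -> p 0 = 0.
Proof. by move=> [_ hZ]; have := hZ 2 0 (ltr0Sn _ 1); rewrite scaler0; lra. Qed.

Lemma sublinearZ p (t : R) x : sublinear p -> 0 <= t -> p (t *: x) = t * p x.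
Proof.
move=> hp; rewrite le_eqVlt => /orP[/eqP <-|t0]; last exact: hp.2.
by rewrite scale0r mul0r sublinear0.
Qed.

Lemma sublinearN p x : sublinear p -> - p (- x) <= p x.
Proof. by move=> hp; have := hp.1 x (- x); rewrite subrr sublinear0 //; lra. Qed.

Section Slide.
Variable p : E -> R.
Hypothesis hp : sublinear p.

Definition slide y x :=
  inf [set p (x + t *: y) - t * p y | t in [set t : R | 0 <= t]].

Lemma slide_le y x (t : R) : 0 <= t -> slide y x <= p (x + t *: y) - t * p y.
Proof.
move=> t0; apply: (@inf_image_le _ _ _ (- p (- x))) => // s s0.
by have := hp.1 (x + s *: y) (- x); rewrite addrC addKr sublinearZ //; lra.
Qed.

Lemma le_slide y x (b : R) :
  (forall t : R, 0 <= t -> b <= p (x + t *: y) - t * p y) -> b <= slide y x.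
Proof. by move=> h; apply: le_inf_image => //; exists 0 => /=. Qed.

Lemma slide_le_self y x : slide y x <= p x.
Proof. by have := slide_le y x (lexx 0); rewrite scale0r addr0 mul0r subr0. Qed.

Lemma slide_opp y : slide y (- y) <= - p y.
Proof. by have := slide_le y (- y) ler01; rewrite scale1r addNr sublinear0 // mul1r sub0r. Qed.

Lemma slide_sublinear y : sublinear (slide y).
Proof.
split.
- move=> x1 x2.
  have h t1 t2 : 0 <= t1 -> 0 <= t2 -> slide y (x1 + x2) <=
      (p (x1 + t1 *: y) - t1 * p y) + (p (x2 + t2 *: y) - t2 * p y).
    move=> t10 t20; apply: le_trans (slide_le _ _ (addr_ge0 t10 t20)) _.
    rewrite scalerDl addrACA.
    by have := hp.1 (x1 + t1 *: y) (x2 + t2 *: y); lra.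
  suff : slide y (x1 + x2) - slide y x1 <= slide y x2 by lra.
  apply: le_slide => t2 t20.
  suff : slide y (x1 + x2) - (p (x2 + t2 *: y) - t2 * p y) <= slide y x1 by lra.
  by apply: le_slide => t1 t10; have := h t1 t2 t10 t20; lra.
- move=> s x s0; apply/eqP; rewrite eq_le; apply/andP; split.
  + suff : slide y (s *: x) / s <= slide y x by rewrite ler_pdivrMr // mulrC.
    apply: le_slide => t t0; rewrite ler_pdivrMr //.
    apply: le_trans (slide_le _ _ (mulr_ge0 (ltW s0) t0)) _.
    rewrite -scalerA -scalerDr sublinearZ ?(ltW s0) //.
    by rewrite le_eqVlt; apply/orP; left; apply/eqP; ring.
  + apply: le_slide => t t0.
    have st0 : 0 <= t / s by rewrite divr_ge0 // ltW.
    apply: le_trans (ler_wpM2l (ltW s0) (slide_le y x st0)) _.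
    have sK : s * (t / s) = t by rewrite mulrCA divff ?gt_eqF // mulr1.
    rewrite mulrBr mulrA sK -(sublinearZ (x + t / s *: y) hp) ?(ltW s0) //.
    by rewrite scalerDr scalerA sK.
Qed.

End Slide.

Lemma chain_inf_sublinear p (A : set (E -> R)) : A !=set0 ->
  (forall q, A q -> sublinear q /\ forall x, q x <= p x) ->
  (forall q1 q2, A q1 -> A q2 -> (forall x, q1 x <= q2 x) \/ (forall x, q2 x <= q1 x)) ->
  sublinear (fun x => inf [set q x | q in A]) /\
  forall q x, A q -> inf [set q x | q in A] <= q x.
Proof.
move=> A0 hA Atot; set m := fun x => _.
have mlb q x : A q -> m x <= q x.
  move=> Aq; apply: (@inf_image_le _ _ _ (- p (- x))) => // q' Aq'.
  have [hq' hq'p] := hA q' Aq'; apply: le_trans (sublinearN _ hq').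
  by rewrite lerN2.
have mge x b : (forall q, A q -> b <= q x) -> b <= m x by exact: le_inf_image.
split=> //; split.
- move=> x y.
  have h q1 q2 : A q1 -> A q2 -> m (x + y) <= q1 x + q2 y.
    move=> Aq1 Aq2; have [[hq1 _] [hq2 _]] := (hA q1 Aq1, hA q2 Aq2).
    case: (Atot q1 q2 Aq1 Aq2) => h12.
    + apply: le_trans (mlb _ _ Aq1) _; apply: le_trans (hq1.1 x y) _.
      by rewrite lerD2l.
    + apply: le_trans (mlb _ _ Aq2) _; apply: le_trans (hq2.1 x y) _.
      by rewrite lerD2r.
  suff : m (x + y) - m x <= m y by lra.
  apply: (mge) => q2 Aq2; suff : m (x + y) - q2 y <= m x by lra.
  by apply: (mge) => q1 Aq1; have := h q1 q2 Aq1 Aq2; lra.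
- move=> s x s0; apply/eqP; rewrite eq_le; apply/andP; split.
  + rewrite -ler_pdivrMl //; apply: (mge) => q Aq; rewrite ler_pdivrMl //.
    by have [hq _] := hA q Aq; rewrite -hq.2 //; exact: (mlb).
  + apply: (mge) => q Aq; have [hq _] := hA q Aq.
    by rewrite hq.2 // ler_pM2l //; exact: (mlb).
Qed.

Lemma sublinear_additive_minorant p : sublinear p -> exists q, sublinear q /\
  (forall x, q x <= p x) /\ (forall x y, q (x + y) = q x + q y).
Proof.
move=> hp; pose T := {q : E -> R | sublinear q /\ forall x, q x <= p x}.
pose below (a b : T) := `[< forall x, sval b x <= sval a x >].
have [t tmin] : exists t : T, forall s, below t s -> s = t.
  apply: Zorn.
  - by move=> a; apply/asboolP.
  - move=> a b c /asboolP hab /asboolP hbc; apply/asboolP => x.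
    exact: le_trans (hbc x) (hab x).
  - move=> [a ha] [b hb] /asboolP /= hab /asboolP /= hba; apply: eq_exist.
    by apply/funext => x; apply/eqP; rewrite eq_le hab hba.
  - move=> A Atot.
    have [[a0 Aa0]|A0] := pselect (A !=set0); last first.
      exists (exist _ p (conj hp (fun x => lexx _))) => s As.
      by exfalso; apply: A0; exists s.
    have [] := @chain_inf_sublinear p [set sval a | a in A].
    + by exists (sval a0), a0.
    + by move=> _ [a _ <-]; exact: (svalP a).
    + move=> _ _ [a Aa <-] [b Ab <-].
      by case: (Atot a b Aa Ab) => /asboolP; [right|left].
    set m := fun x => _ => hm mlb.
    have mp x : m x <= p x.
      by apply: le_trans (mlb _ x (ex_intro2 _ _ a0 Aa0 erefl)) _; case: (svalP a0).
    exists (exist _ m (conj hm mp)) => s As; apply/asboolP => x /=.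
    by apply: mlb; exists s.
(* A minimal [t] equals [slide t y], and [slide t y x <= t (x + y) - t y]. *)
exists (sval t); have [ht htp] := svalP t; split=> //; split=> // x y.
have hs z : slide (sval t) y z <= p z := le_trans (slide_le_self ht y z) (htp z).
have : below t (exist _ _ (conj (slide_sublinear ht y) hs)).
  by apply/asboolP => z; exact: slide_le_self.
move=> /tmin /(congr1 sval) /= tE.
have := slide_le ht y x ler01; rewrite scale1r mul1r tE.
by have := ht.1 x y; lra.
Qed.

Lemma hahn_banach_sublinear p x0 : sublinear p -> exists L, linear_form L /\
  (forall x, L x <= p x) /\ L x0 = p x0.
Proof.
move=> hp; have [q [hq [hqp qD]]] := sublinear_additive_minorant (slide_sublinear hp x0).
have q0 : q 0 = 0 := sublinear0 hq.
have qN x : q (- x) = - q x by have := qD x (- x); rewrite subrr q0; lra.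
have qZ (t : R) x : q (t *: x) = t * q x.
  case: (ltrgtP t 0) => [tn|tp|->]; last by rewrite scale0r q0 mul0r.
  + by rewrite -[t]opprK scaleNr qN hq.2 ?oppr_gt0 //; ring.
  + exact: hq.2.
have qp x : q x <= p x := le_trans (hqp x) (slide_le_self hp x0 x).
exists q; split; first by move=> a x y; rewrite qD qZ.
split=> //; apply/eqP; rewrite eq_le qp /=.
by have := hqp (- x0); have := slide_opp hp x0; rewrite qN; lra.
Qed.

Section Gauge.
Variable W : set E.
Hypotheses (W_convex : is_convex W) (W0 : W 0)
  (W_absorbing : forall x, exists2 d : R, 0 < d & W (d *: x)).

Definition gauge x := inf [set t : R | 0 < t /\ W (t^-1 *: x)].

Let gauge_set_neq0 x : [set t : R | 0 < t /\ W (t^-1 *: x)] !=set0.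
Proof.
have [d d0 Wd] := W_absorbing x.
by exists d^-1; split; [rewrite invr_gt0|rewrite invrK].
Qed.

Let gauge_le x t : 0 < t -> W (t^-1 *: x) -> gauge x <= t.
Proof. by move=> t0 Wt; apply: ge_inf => //; exists 0 => s [s0 _]; exact: ltW. Qed.

Let le_gauge x b : (forall t, 0 < t -> W (t^-1 *: x) -> b <= t) -> b <= gauge x.
Proof. by move=> hb; apply: lb_le_inf => // t [t0 Wt]; exact: hb. Qed.

Lemma gauge_sublinear : sublinear gauge.
Proof.
split.
- move=> x y.
  have h t1 t2 : 0 < t1 -> W (t1^-1 *: x) -> 0 < t2 -> W (t2^-1 *: y) ->
      gauge (x + y) <= t1 + t2.
    move=> t10 Wx t20 Wy; have t12 : 0 < t1 + t2 by exact: addr_gt0.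
    apply: gauge_le => //.
    have c01 : 0 <= t1 / (t1 + t2) <= 1.
      apply/andP; split; first by rewrite divr_ge0 // ltW.
      by rewrite ler_pdivrMr // mul1r lerDl ltW.
    have := W_convex Wx Wy c01; rewrite !scalerA.
    have -> : t1 / (t1 + t2) * t1^-1 = (t1 + t2)^-1.
      by field; rewrite !gt_eqF.
    have -> : (1 - t1 / (t1 + t2)) * t2^-1 = (t1 + t2)^-1.
      by field; rewrite !gt_eqF.
    by rewrite scalerDr.
  suff : gauge (x + y) - gauge x <= gauge y by lra.
  apply: le_gauge => t2 t20 W2; suff : gauge (x + y) - t2 <= gauge x by lra.
  by apply: le_gauge => t1 t10 W1; have := h t1 t2 t10 W1 t20 W2; lra.
- move=> s x s0; apply/eqP; rewrite eq_le; apply/andP; split.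
  + suff : gauge (s *: x) / s <= gauge x by rewrite ler_pdivrMr // mulrC.
    apply: le_gauge => t t0 Wt; rewrite ler_pdivrMr //.
    apply: gauge_le; first exact: mulr_gt0.
    by rewrite scalerA invfM -mulrA mulVf ?gt_eqF // mulr1.
  + apply: le_gauge => t t0 Wt; rewrite mulrC -ler_pdivlMr //.
    apply: gauge_le; first exact: divr_gt0.
    by rewrite invf_div mulrC; rewrite scalerA in Wt.
Qed.

Lemma gauge_le1 w : W w -> gauge w <= 1.
Proof. by move=> Ww; apply: gauge_le => //; rewrite invr1 scale1r. Qed.

Lemma gauge_ge1 w : ~ W w -> 1 <= gauge w.
Proof.
move=> nWw; rewrite leNgt; apply/negP => /(inf_lt (gauge_set_neq0 w))[t [t0 Wt] t1].
apply: nWw; have t01 : 0 <= t <= 1 by rewrite !ltW.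
have := W_convex Wt W0 t01.
by rewrite scalerA mulfV ?gt_eqF // scale1r scaler0 addr0.
Qed.

End Gauge.

Lemma separate_absorbing_convex (W : set E) w0 : is_convex W -> W 0 ->
  (forall x, exists2 d : R, 0 < d & W (d *: x)) -> ~ W w0 ->
  exists L, linear_form L /\ (forall w, W w -> L w <= 1) /\ 1 <= L w0.
Proof.
move=> cW W0 abs nW.
have [L [hL [hLg hLw0]]] := hahn_banach_sublinear w0 (gauge_sublinear cW abs).
exists L; split=> //; split.
- by move=> w Ww; apply: le_trans (hLg w) (gauge_le1 Ww).
- by rewrite hLw0; exact: gauge_ge1.
Qed.

Lemma separate_convex (O C : set E) o0 c0 : is_convex O -> is_convex C ->
  O o0 -> C c0 -> (forall x, exists2 d : R, 0 < d & O (o0 + d *: x)) ->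
  ~ (O `&` C !=set0) ->
  exists L, linear_form L /\ (forall o c, O o -> C c -> L o <= L c) /\
    1 <= L (c0 - o0).
Proof.
move=> cO cC Oo0 Cc0 abs OC.
pose W := [set o - c + (c0 - o0) | o in O & c in C].
have cW : is_convex W.
  move=> _ _ [o1 O1 [c1 C1 <-]] [o2 O2 [c2 C2 <-]] t t01.
  exists (t *: o1 + (1 - t) *: o2); first exact: cO.
  exists (t *: c1 + (1 - t) *: c2); first exact: cC.
  by rewrite convex_comb_addr convex_comb_subr.
have W0 : W 0 by exists o0 => //; exists c0 => //; rewrite -[c0 - o0]opprB subrr.
have absW x : exists2 d : R, 0 < d & W (d *: x).
  have [d d0 Od] := abs x; exists d => //; exists (o0 + d *: x) => //.
  by exists c0 => //; rewrite -addrA addKr addrC addKr.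
have nW : ~ W (c0 - o0).
  move=> [o Oo [c Cc /(canRL (addrK _))]]; rewrite subrr => /subr0_eq oc.
  by apply: OC; exists o; split=> //; rewrite oc.
have [L [hL [LW Lw0]]] := separate_absorbing_convex cW W0 absW nW.
exists L; split=> //; split=> // o c Oo Cc.
have := LW _ (ex_intro2 _ _ o Oo (ex_intro2 _ _ c Cc erefl)).
rewrite linear_formD // linear_formB //; lra.
Qed.

End HahnBanach.

(** * Open convex sets and continuous linear forms *)

Section TVS.
Context {R : realType} {X : tvsType R}.
Implicit Types (x y a : X) (f g L : X -> R).

Lemma continuous_affine a (k : R) : continuous (fun v : X => a + k *: v).
Proof.
move=> v.
have hs : {for v, continuous (fun v : X => k *: v)}.
  apply: (@continuous_comp X (R^o * X)%type X (fun v => (k, v)) (fun z => z.1 *: z.2));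
    last exact: scale_continuous.
  by apply: (@cvg_pair _ _ _ _ (nbhs (k : R^o))); [exact: cvg_cst|exact: cvg_id].
apply: (@continuous_comp X (X * X)%type X (fun v => (a, k *: v)) (fun z => z.1 + z.2));
  last exact: add_continuous.
by apply: (@cvg_pair _ _ _ _ (nbhs a)); [exact: cvg_cst|exact: hs].
Qed.

Lemma continuous_line x y : continuous (fun s : R^o => x + s *: y).
Proof.
move=> s.
have hs : {for s, continuous (fun s : R^o => s *: y)}.
  apply: (@continuous_comp R^o (R^o * X)%type X (fun s => (s, y)) (fun z => z.1 *: z.2));
    last exact: scale_continuous.
  by apply: (@cvg_pair _ _ _ _ (nbhs (s : R^o))); [exact: cvg_id|exact: cvg_cst].
apply: (@continuous_comp R^o (X * X)%type X (fun s => (x, s *: y)) (fun z => z.1 + z.2));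
  last exact: add_continuous.
by apply: (@cvg_pair _ _ _ _ (nbhs x)); [exact: cvg_cst|exact: hs].
Qed.

Lemma open_radial (V : set X) x y : open V -> V x ->
  exists2 s0 : R, 0 < s0 & forall s : R, 0 <= s <= s0 -> V (x + s *: y).
Proof.
move=> oV Vx.
have : nbhs (0 : R^o) [set s : R^o | V (x + s *: y)].
  apply: (@continuous_line x y 0); rewrite scale0r addr0.
  exact: open_nbhs_nbhs.
move=> /nbhs_ballP[e e0 he]; exists (e / 2); first by rewrite divr_gt0.
move=> s /andP[s0 s1]; apply: he; rewrite -ball_normE /= sub0r normrN ger0_norm //.
by apply: le_lt_trans s1 _; rewrite ltr_pdivrMr // ltr_pMr // ltr1n.
Qed.

Lemma nbhs_convex_open (A : set X) x : nbhs x A ->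
  exists B, [/\ open B, B x, is_convex B & B `<=` A].
Proof.
move=> hA; have [Bs Bcvx [Bopen Bbasis]] := @locally_convex R X.
have [U [BsU Ux] UA] := Bbasis x A hA.
exists U; split=> //; first exact: Bopen.
move=> a b Ua Ub t /andP[t0 t1].
exact/set_mem/(Bcvx U (mem_set BsU) a b (Itv01 t0 t1) (mem_set Ua) (mem_set Ub)).
Qed.

Lemma linear_form_continuous L (W : set X) (M : R) : linear_form L ->
  nbhs 0 W -> (forall w, W w -> L w <= M) -> continuous (L : X -> R^o).
Proof.
move=> hL hW hLW.
pose N := W `&` [set w | W (- w)].
have hN : nbhs 0 N.
  apply: filterI => //.
  have : nbhs (0 : X) [set v | W (0 + (-1 : R) *: v)].
    by apply: continuous_affine; rewrite scaler0 addr0.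
  by apply: filterS => w /=; rewrite add0r scaleN1r.
have NL w : N w -> `|L w| <= M.
  move=> [Ww Wmw]; rewrite ler_norml hLW // andbT.
  by have := hLW _ Wmw; rewrite linear_formN //; lra.
have M0 : 0 <= M.
  by have := NL 0 (nbhs_singleton hN); rewrite linear_form0 // normr0.
move=> x; apply/cvgrPdist_lt => e e0.
pose k := (M + 1) / e.
have k0 : 0 < k by rewrite divr_gt0 //; lra.
have : nbhs x [set v | N (- (k *: x) + k *: v)].
  by apply: continuous_affine; rewrite addNr.
apply: filterS => v /NL; rewrite linear_formD // linear_formN // !linear_formZ //.
rewrite addrC -mulrBr normrM gtr0_norm // distrC => h.
rewrite -(ltr_pM2l k0); apply: le_lt_trans h _.
by rewrite /k divfK ?gt_eqF //; lra.
Qed.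

Lemma hausdorff_dual_separates x : hausdorff_space X -> x != 0 ->
  exists g, dual g /\ 1 <= g x.
Proof.
move=> hX x0.
have [A [B [hA [hB AB0]]]] : exists A B, nbhs 0 A /\ nbhs x B /\ ~ (A `&` B !=set0).
  apply: contrapT => hn; move/eqP: x0; apply; apply/esym; apply: hX => A B hA hB.
  by apply: contrapT => hn2; apply: hn; exists A, B.
have nAx : ~ A x by move=> Ax; apply: AB0; exists x; split=> //; exact: nbhs_singleton.
have [W [oW W0 cW WA]] := nbhs_convex_open hA.
have absW y : exists2 t : R, 0 < t & W (t *: y).
  have [s0 s00 hs] := open_radial y oW W0.
  by exists s0 => //; rewrite -[_ *: _]add0r; apply: hs; rewrite lexx ltW.
have [L [hL [hLW hLx]]] := separate_absorbing_convex cW W0 absW (fun Wx => nAx (WA _ Wx)).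
exists L; split=> //; split=> //; apply: linear_form_continuous hLW => //.
exact: open_nbhs_nbhs.
Qed.

Lemma dual_linear_form g : dual g -> linear_form g.
Proof. by case. Qed.

Lemma dualDZ f (a b : R) x y : dual f -> f (a *: x + b *: y) = a * f x + b * f y.
Proof. by move=> /dual_linear_form hf; rewrite hf linear_formZ. Qed.

Lemma dual_comb f g (a b : R) : dual f -> dual g -> dual (fun x => a * f x + b * g x).
Proof.
move=> [lf cf] [lg cg]; split; first exact: linear_form_comb.
move=> x; have h1 := @cvgMl_tmp _ _ _ _ _ a _ (cf x).
have h2 := @cvgMl_tmp _ _ _ _ _ b _ (cg x).
exact: (@cvgD R R^o X (nbhs x) _ (fun y => a * f y) (fun y => b * g y) _ _
  (h1 (nbhs_filter x)) (h2 (nbhs_filter x))).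
Qed.

End TVS.

Section Tube.
Context {R : realType} {X : tvsType R}.
Implicit Types (V W N : set X) (x a d : X) (g : X -> R).

Lemma open_affine_preimage V a (k : R) : open V -> open [set w | V (a + k *: w)].
Proof.
by move=> oV; apply: (@open_comp _ _ (fun w => a + k *: w)) => // w _;
  exact: continuous_affine.
Qed.

Lemma open_convexI V W : open_convex V -> open_convex W -> open_convex (V `&` W).
Proof.
move=> [oV cV] [oW cW]; split; first exact: openI.
by move=> x y [Vx Wx] [Vy Wy] t t01; split; [exact: cV|exact: cW].
Qed.

Lemma open_convex_affine_preimage V a (k : R) :
  open_convex V -> open_convex [set w | V (a + k *: w)].
Proof.
move=> [oV cV]; split; first exact: open_affine_preimage.
by move=> x y Vx Vy t t01; rewrite /= -convex_comb_affine; exact: cV.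
Qed.

Lemma open_convex_dual_band g (e : R) : dual g -> open_convex [set x | `|g x| < e].
Proof.
move=> hg; split.
  rewrite openE => x gx; have := (hg.2 x); move/cvgrPdist_lt => /(_ (e - `|g x|)).
  rewrite subr_gt0 => /(_ gx); apply: filterS => y /= hy.
  have := ler_normD (g x) (g y - g x); rewrite addrCA subrr addr0.
  by rewrite distrC in hy; lra.
move=> x y gx gy t t01; rewrite /= dualDZ //.
exact: le_lt_trans (norm_convex_comb_le _ _ t01) (convex_comb_lt t01 gx gy).
Qed.

Lemma open_convex_segment_sum N x0 d : open_convex N ->
  open_convex [set x | exists2 s : R, 0 <= s <= 1 & N (x - (x0 + s *: d))].
Proof.
move=> [oN cN]; split.
  rewrite openE => x [s s01 Nx]; rewrite /interior.
  have : nbhs x [set y | N (- (x0 + s *: d) + 1 *: y)].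
    by apply: open_nbhs_nbhs; split; [exact: open_affine_preimage|rewrite /= scale1r addrC].
  by apply: filterS => y /=; rewrite scale1r addrC => Ny; exists s.
move=> x y [s1 /andP[s10 s11] N1] [s2 /andP[s20 s21] N2] t /andP[t0 t1].
exists (t * s1 + (1 - t) * s2).
  have t1' : 0 <= 1 - t by rewrite subr_ge0.
  rewrite addr_ge0 ?mulr_ge0 //=.
  have := ler_wpM2l t0 s11; have := ler_wpM2l t1' s21; lra.
have -> : x0 + (t * s1 + (1 - t) * s2) *: d =
    t *: (x0 + s1 *: d) + (1 - t) *: (x0 + s2 *: d).
  by rewrite -[s1 *: d]scale1r -[s2 *: d]scale1r convex_comb_affine scale1r !scalerA -scalerDl.
by rewrite -convex_comb_subr; apply: cN; rewrite ?t0.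
Qed.

Lemma open_convex_tube V x0 d g : open_convex V -> V x0 -> dual g -> 1 <= g d ->
  exists e : R, exists2 W, 0 < e /\ open_convex W &
    [/\ W x0, W (x0 + d) & forall v, W v -> ~ V v -> e <= g (v - x0)].
Proof.
move=> [oV cV] Vx0 hg gd.
have [s1 s10 hs1] := open_radial d oV Vx0.
pose e := s1 / 4; have e0 : 0 < e by rewrite divr_gt0.
(* [x0 + s d + N] stays in V while [s <= 2 e], and [g] varies by less than [e] on [N]. *)
pose N := [set n | V (x0 + 2 *: n)] `&` [set n | `|g n| < e].
have ocN : open_convex N.
  exact: open_convexI (open_convex_affine_preimage _ _ (conj oV cV))
                      (open_convex_dual_band _ hg).
have N0 : N 0.
  by split=> /=; rewrite ?scaler0 ?addr0 // (linear_form0 (dual_linear_form hg)) normr0.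
exists e, [set x | exists2 s : R, 0 <= s <= 1 & N (x - (x0 + s *: d))].
  by split=> //; exact: open_convex_segment_sum.
split.
- by exists 0; rewrite ?lexx ?ler01 // scale0r addr0 subrr.
- by exists 1; rewrite ?lexx ?ler01 // scale1r subrr.
- move=> v [s /andP[s0 s1'] [Vn gn]] nVv.
  set n := v - (x0 + s *: d) in Vn gn.
  have ss : 2 * e < s.
    rewrite ltNge; apply/negP => hs; apply: nVv.
    have V2s : V (x0 + 2 *: (s *: d)).
      rewrite scalerA; apply: hs1; apply/andP; split; first exact: mulr_ge0.
      by rewrite /e in hs; lra.
    have h12 : 0 <= (2^-1 : R) <= 1 by apply/andP; split; lra.
    have := cV _ _ V2s Vn (2^-1) h12; rewrite convex_comb_affine.
    rewrite (_ : 1 - 2^-1 = 2^-1 :> R); last by field.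
    by rewrite -scalerDr scalerA mulfV ?pnatr_eq0 // scale1r addrA /n addrC subrK.
  have -> : v - x0 = n + s *: d by rewrite /n opprD addrA subrK.
  rewrite -[n]scale1r dualDZ // mul1r.
  have := ler_wpM2l s0 gd.
  move: gn; rewrite /= ltr_norml => /andP[gn _]; lra.
Qed.

End Tube.

(** * The Fitzpatrick function *)

Section Fitzpatrick.
Context {R : realType} {X : tvsType R}.
Local Notation Z := (X * (X -> R))%type.
Implicit Types (z w u v : Z) (S T : set Z).

Definition mono_gap z u : R := z.2 z.1 - z.2 u.1 - u.2 z.1 + u.2 u.1.

Definition fitz_term z u : R := u.2 z.1 + z.2 u.1 - u.2 u.1.

Lemma fitz_termE z u : fitz_term z u = coupling z - mono_gap z u.
Proof. rewrite /fitz_term /mono_gap /coupling; lra. Qed.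

Lemma mono_gapC z u : mono_gap z u = mono_gap u z.
Proof. rewrite /mono_gap; lra. Qed.

Lemma mono_gap_comb t z w u : Zd z -> Zd w -> Zd u ->
  mono_gap (zcomb t z w) u =
  t * mono_gap z u + (1 - t) * mono_gap w u - t * (1 - t) * mono_gap z w.
Proof.
by move=> hz hw hu; rewrite /mono_gap /zcomb /= !dualDZ //; ring.
Qed.

Lemma Zd_comb t z w : Zd z -> Zd w -> Zd (zcomb t z w).
Proof. exact: dual_comb. Qed.

Lemma fitz_term_le_phi S z u : S u -> ((fitz_term z u)%:E <= phi S z)%E.
Proof. by move=> Su; apply: ereal_sup_ubound; exists u. Qed.

Lemma phi_leP S z (r : R) :
  (phi S z <= r%:E)%E <-> forall u, S u -> fitz_term z u <= r.
Proof.
split=> [h u Su|h]; first by rewrite -lee_fin; exact: le_trans (fitz_term_le_phi z Su) h.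
by apply: ge_ereal_sup => _ [u Su <-]; rewrite lee_fin; exact: h.
Qed.

Lemma phi_gtP S z (r : R) : (r%:E < phi S z)%E -> exists2 u, S u & r < fitz_term z u.
Proof.
move=> h; apply: contrapT => hn; move: h; apply/negP; rewrite -leNgt.
apply/phi_leP => u Su; rewrite leNgt; apply/negP => hlt; apply: hn; by exists u.
Qed.

Lemma phi_subset S S' z : S `<=` S' -> (phi S z <= phi S' z)%E.
Proof. by move=> SS'; apply: ereal_sup_le => _ [u Su <-]; exists u => //; exact: SS'. Qed.

Lemma set_phi_le_cP T z :
  set_phi_le_c T z <-> Zd z /\ forall u, T u -> 0 <= mono_gap z u.
Proof.
split=> [[hz /phi_leP hp]|[hz h]]; split=> //.
  by move=> u Tu; have := hp u Tu; rewrite fitz_termE; lra.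
by apply/phi_leP => u Tu; rewrite fitz_termE; have := h u Tu; lra.
Qed.

Lemma NI_no_uniform_gap S w (d : R) : ((coupling w)%:E <= phi S w)%E -> 0 < d ->
  (forall u, S u -> d <= mono_gap w u) -> False.
Proof.
move=> hw d0 hd.
have : (phi S w <= (coupling w - d)%:E)%E.
  by apply/phi_leP => u Su; rewrite fitz_termE; have := hd u Su; lra.
by move=> /(le_trans hw); rewrite lee_fin; lra.
Qed.

Lemma NI_mono_gap_comb S z u t : Zd z -> Zd u -> S `<=` Zd -> 0 < t < 1 ->
  ((coupling (zcomb t z u))%:E <= phi S (zcomb t z u))%E ->
  (forall v, S v -> 0 <= mono_gap z v /\ 0 <= mono_gap u v) -> 0 <= mono_gap z u.
Proof.
move=> hz hu SZ /andP[t0 t1] hNI hS; rewrite leNgt; apply/negP => hlt.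
have d0 : 0 < t * (1 - t) * - mono_gap z u.
  by rewrite !mulr_gt0 ?oppr_gt0 // subr_gt0.
apply: (NI_no_uniform_gap hNI d0) => v Sv; rewrite mono_gap_comb //; last exact: SZ.
have [hzv huv] := hS v Sv.
have t1' : 0 <= 1 - t by rewrite subr_ge0 ltW.
by have := mulr_ge0 (ltW t0) hzv; have := mulr_ge0 t1' huv; lra.
Qed.

Lemma MX_subset_phi_le_c T : MX T -> T `<=` set_phi_le_c T.
Proof.
move=> [Top [_ Tmon]] u Tu; apply/set_phi_le_cP; split; first exact: Top.
by move=> v Tv; exact: Tmon.
Qed.

Lemma locally_NI_NI T : MX T -> locally_NI T ->
  forall w, Zd w -> ((coupling w)%:E <= phi T w)%E.
Proof.
move=> [_ [[[y ys] Ty] _]] hNI w hw.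
have oc : open_convex (@setT X) by split; [exact: openT|by []].
have ne : setT `&` dom T !=set0 by exists y; split=> //; exists ys.
by apply: le_trans (hNI _ oc ne w hw I) _; apply: phi_subset => v [].
Qed.

End Fitzpatrick.

Section RepresentativeSet.
Context {R : realType} {X : tvsType R}.
Local Notation Z := (X * (X -> R))%type.
Variable T : set Z.
Hypotheses (hT : MX T) (hNI : locally_NI T).

Let M := set_phi_le_c T.

Lemma set_phi_le_c_monotone : monotone_op M.
Proof.
move=> z w /set_phi_le_cP[hz Hz] /set_phi_le_cP[hw Hw]; change (0 <= mono_gap z w).
have t01 : 0 < (2^-1 : R) < 1 by apply/andP; split; lra.
apply: (NI_mono_gap_comb hz hw hT.1 t01 (locally_NI_NI hT hNI (Zd_comb _ hz hw))).
by move=> v Tv; split; [exact: Hz|exact: Hw].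
Qed.

Lemma open_convex_meets_dom V : hausdorff_space X -> open_convex V ->
  V `&` dom M !=set0 -> V `&` dom T !=set0.
Proof.
move=> hX ocV [x0 [Vx0 [x0s /set_phi_le_cP[hz0 Hz0]]]]; apply: contrapT => nVT.
have [Top [[[y ys] Ty] _]] := hT.
have nVy : ~ V y by move=> Vy; apply: nVT; exists y; split=> //; exists ys.
have d0 : y - x0 != 0 by rewrite subr_eq0; apply/eqP => yx; apply: nVy; rewrite yx.
have [g [hg gd]] := hausdorff_dual_separates hX d0.
have [e [W [e0 ocW] [Wx0 Wy Wg]]] := open_convex_tube ocV Vx0 hg gd.
rewrite addrC subrK in Wy.
have hNIW := hNI ocW (ex_intro _ y (conj Wy (ex_intro _ ys Ty))).
(* Points of T over W lie outside V, so tilting z0 by [-g] spreads them away. *)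
pose w : Z := (x0, fun a => 1 * x0s a + (-1) * g a).
apply: (NI_no_uniform_gap (hNIW w (dual_comb _ _ hz0 hg) Wx0) e0).
move=> [v1 v2] [Tv /= Wv].
have nVv : ~ V v1 by move=> Vv; apply: nVT; exists v1; split=> //; exists v2.
have -> : mono_gap w (v1, v2) = mono_gap (x0, x0s) (v1, v2) + g (v1 - x0).
  by rewrite /mono_gap /= linear_formB; [lra|exact: dual_linear_form].
by have := Hz0 _ Tv; have := Wg _ Wv nVv; lra.
Qed.

Lemma set_phi_le_c_identifiable : hausdorff_space X -> identifiable M.
Proof.
move=> hX V ocV hVM z [hz [Vz /phi_leP hphi]].
have [Top [_ Tmon]] := hT.
have hNIV := hNI ocV (open_convex_meets_dom hX ocV hVM).
apply/set_phi_le_cP; split=> // u Tu; have Zu := Top u Tu.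
have [s1 s10 hs1] := open_radial (u.1 - z.1) ocV.1 Vz.
pose s := Num.min s1 2^-1.
have s0 : 0 < s by rewrite lt_min s10 invr_gt0 ltr0n.
have sh : s <= 2^-1 by rewrite ge_min lexx orbT.
have hs : 0 < 1 - s < 1 by apply/andP; split; lra.
apply: (@NI_mono_gap_comb _ _ (restr T V) z u (1 - s) hz Zu (fun v hv => Top v hv.1) hs).
  apply: hNIV; first exact: Zd_comb.
  rewrite /= (_ : 1 - (1 - s) = s); last by ring.
  have -> : (1 - s) *: z.1 + s *: u.1 = z.1 + s *: (u.1 - z.1).
    by rewrite scalerBl scale1r scalerBr addrAC addrA.
  by apply: hs1; rewrite ltW //= ge_min lexx.
move=> v [Tv Vv]; split; last exact: Tmon.
have := hphi v (conj (MX_subset_phi_le_c hT Tv) Vv); rewrite fitz_termE; lra.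
Qed.

Lemma set_phi_le_c_unique S : MX S -> T `<=` S -> identifiable S -> S = M.
Proof.
move=> [Sop [[s0 Ss0] Smon]] TS hid.
have SM : S `<=` M.
  move=> z Sz; apply/set_phi_le_cP; split; first exact: Sop.
  by move=> u Tu; exact: Smon z u Sz (TS u Tu).
apply/seteqP; split=> // z Mz.
have oc : open_convex (@setT X) by split; [exact: openT|by []].
have ne : setT `&` dom S !=set0 by exists s0.1; split=> //; exists s0.2; case: s0 Ss0.
apply: (hid setT oc ne); split; first by case: Mz.
split=> //; apply/phi_leP => u [Su _]; rewrite fitz_termE.
have gap0 : 0 <= mono_gap z u := set_phi_le_c_monotone Mz (SM u Su).
lra.
Qed.

End RepresentativeSet.

(** * The lsc convex hull *)

Section Evaluations.
Context {R : realType} {E : lmodType R}.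

Definition evals (xs : seq E) (h : E -> R) : 'rV[R]_(size xs) :=
  \row_(i < size xs) h (nth 0 xs i).

Lemma linear_form_evals (xs : seq E) (Lv : 'rV[R]_(size xs) -> R) :
  linear_form Lv -> exists a, forall h, linear_form h -> Lv (evals xs h) = h a.
Proof.
move=> hLv; exists (\sum_(i < size xs) Lv (delta_mx 0 i) *: nth 0 xs i) => h hh.
rewrite {1}(row_sum_delta (evals xs h)).
rewrite (big_morph Lv (fun u v => linear_formD u v hLv) (linear_form0 hLv)).
rewrite (big_morph h (fun u v => linear_formD u v hh) (linear_form0 hh)).
by apply: eq_bigr => i _; rewrite !linear_formZ // mxE mulrC.
Qed.

Lemma pair_lincombE (M : lmodType R) (a : R) (x y : E * M) :
  a *: x + y = (a *: x.1 + y.1, a *: x.2 + y.2).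
Proof. by []. Qed.

Lemma linear_form_fst (M : lmodType R) (L : E * M -> R) :
  linear_form L -> linear_form (fun x => L (x, 0)).
Proof. by move=> hL a x y; rewrite -hL pair_lincombE /= scaler0 addr0. Qed.

Lemma linear_form_snd (M : lmodType R) (L : E * M -> R) :
  linear_form L -> linear_form (fun y => L (0, y)).
Proof. by move=> hL a x y; rewrite -hL pair_lincombE /= scaler0 addr0. Qed.

Lemma triple_decomp (M1 M2 : lmodType R) (y : M1) (v : M2) (s : R) :
  ((y, v), s) = ((y, 0), 0) + ((0, v), 0) + s *: ((0, 0), 1) :> M1 * M2 * R^o.
Proof.
apply: injective_projections; first apply: injective_projections.
- by rewrite /= scaler0 !addr0.
- by rewrite /= scaler0 add0r addr0.
- by rewrite /= !add0r /GRing.scale /= mulr1.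
Qed.

Lemma linear_form_tripleE (M1 M2 : lmodType R) (L : M1 * M2 * R^o -> R) y v (s : R) :
  linear_form L -> L ((y, v), s) = L ((y, 0), 0) + L ((0, v), 0) + s * L ((0, 0), 1).
Proof. by move=> hL; rewrite {1}triple_decomp !linear_formD // linear_formZ. Qed.

End Evaluations.

(* Lower semicontinuity of g at z only controls finitely many evaluations [xs]
   of the dual component, so the separation takes place in X * R^n * R, a dual
   element being replaced by its evaluations: O is an open box under the level
   r around z, and C is the epigraph of g. *)
Section FiniteDimensionalSeparation.
Context {R : realType} {X : tvsType R}.
Local Notation Z := (X * (X -> R))%type.
Variables (g : Z -> \bar R) (T : set Z) (z : Z) (U : set X) (xs : seq X) (eps r : R).
Hypotheses (g_convex : convex_fun_Z g)
  (gT : forall u, T u -> Zd u /\ (g u <= (coupling u)%:E)%E)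
  (hz : Zd z) (zr : coupling z < r)
  (oU : open U) (cU : is_convex U) (Uz : U z.1) (eps0 : 0 < eps)
  (g_gt : forall y h, U y -> dual h -> (forall a, a \in xs -> `|h a - z.2 a| < eps) ->
     (r%:E < g (y, h))%E).

Local Notation E := (X * 'rV[R]_(size xs) * R^o)%type.

Let O : set E := [set e : E | [/\ U e.1.1,
  forall i, `|e.1.2 0 i - evals xs z.2 0 i| < eps & e.2 < r]].
Let C : set E := [set e : E | exists2 h, dual h &
  evals xs h = e.1.2 /\ (g (e.1.1, h) <= e.2%:E)%E].
Let cu (u : Z) : E := ((u.1, evals xs u.2), coupling u).

Let O_cu_z : O (cu z).
Proof. by split=> // i; rewrite subrr normr0. Qed.

Let C_cu u : T u -> C (cu u).
Proof. by case: u => u1 u2 /gT[hu gu]; exists u2. Qed.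

Let O_convex : is_convex O.
Proof.
move=> a b [a1 a2 a3] [b1 b2 b3] t t01; split=> /=.
- exact: cU.
- move=> i.
  have -> : (t *: a + (1 - t) *: b).1.2 0 i = t * a.1.2 0 i + (1 - t) * b.1.2 0 i.
    by rewrite !mxE.
  rewrite (_ : _ - _ = t * (a.1.2 0 i - evals xs z.2 0 i) +
                       (1 - t) * (b.1.2 0 i - evals xs z.2 0 i)); last by ring.
  exact: le_lt_trans (norm_convex_comb_le _ _ t01) (convex_comb_lt t01 (a2 i) (b2 i)).
- exact: convex_comb_lt.
Qed.

Let C_convex : is_convex C.
Proof.
move=> a b [ha hda [hva hga]] [hb hdb [hvb hgb]] t t01.
exists (fun x => t * ha x + (1 - t) * hb x); first exact: dual_comb.
split; first by apply/rowP => i; rewrite /= -hva -hvb !mxE.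
exact (@g_convex (a.1.1, ha) (b.1.1, hb) hda hdb a.2 b.2 hga hgb t t01).
Qed.

Let O_absorbing e : exists2 d : R, 0 < d & O (cu z + d *: e).
Proof.
have [s1 s10 hs1] := open_radial e.1.1 oU Uz.
pose B := \sum_(i < size xs) `|e.1.2 0 i|.
have Bi i : `|e.1.2 0 i| <= B.
  by rewrite /B (bigD1 i) //= lerDl; apply: sumr_ge0.
have B1 : 0 < B + 1 by rewrite ltr_wpDl ?sumr_ge0.
have e21 : 0 < `|e.2| + 1 by rewrite ltr_wpDl.
pose d := Num.min s1 (Num.min (eps / (B + 1)) ((r - coupling z) / (`|e.2| + 1))).
have d0 : 0 < d by rewrite !lt_min s10 !divr_gt0 // subr_gt0.
have dB : d * (B + 1) <= eps by rewrite -ler_pdivlMr // !ge_min lexx !orbT.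
have de : d * (`|e.2| + 1) <= r - coupling z.
  by rewrite -ler_pdivlMr // !ge_min lexx !orbT.
exists d => //; split=> /=.
- by apply: hs1; rewrite ltW //= ge_min lexx.
- move=> i; rewrite !mxE addrAC subrr add0r normrM (gtr0_norm d0).
  by have := ler_wpM2l (ltW d0) (Bi i); lra.
- change (coupling z + d * e.2 < r).
  by have := ler_wpM2l (ltW d0) (ler_norm e.2); lra.
Qed.

Let O_C_disjoint : ~ (O `&` C !=set0).
Proof.
move=> [c [[Uc vc sc] [h hh [hv hg]]]].
have hxs a : a \in xs -> `|h a - z.2 a| < eps.
  move=> ha; have := vc (Ordinal (etrans (index_mem a xs) ha)).
  by rewrite -hv !mxE /= nth_index.
have := lt_le_trans (g_gt Uc hh hxs) hg; rewrite lte_fin; lra.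
Qed.

Lemma finite_dimensional_separation u0 : T u0 ->
  exists Lx a, exists lam d : R, [/\ dual Lx, 0 <= lam, 0 < d &
    forall u, T u -> Lx z.1 + z.2 a + d <= Lx u.1 + u.2 a + lam * (coupling u - coupling z)].
Proof.
move=> Tu0.
have [L [hL [Lsep Lc0]]] :=
  separate_convex O_convex C_convex O_cu_z (C_cu Tu0) O_absorbing O_C_disjoint.
pose Lx y := L ((y, 0), 0); pose lam := L ((0, 0), 1).
have hLx : linear_form Lx := linear_form_fst (linear_form_fst hL).
have [a La] := linear_form_evals (linear_form_snd (linear_form_fst hL)).
have Leval y h (s : R) : dual h -> L ((y, evals xs h), s) = Lx y + h a + lam * s.
  move=> /dual_linear_form hh; rewrite linear_form_tripleE //.
  by rewrite [_ * lam]mulrC; congr (_ + _ + _); exact: La.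
have Lx_dual : dual Lx.
  split=> //; apply: (linear_form_continuous (W := [set y | U (z.1 + 1 *: y)])
    (M := L (cu u0) - L (cu z)) hLx).
    by apply: continuous_affine; rewrite scaler0 addr0; exact: open_nbhs_nbhs.
  move=> y Uy; have Oy : O (cu z + ((y, 0), 0)).
    split=> /=; first by move: Uy; rewrite /= scale1r.
    - by move=> i; rewrite !mxE addr0 subrr normr0.
    - by rewrite addr0.
  by have := Lsep _ _ Oy (C_cu Tu0); rewrite linear_formD // -/(Lx y); lra.
have lam0 : 0 <= lam.
  apply: (ge0_of_ray_bounded (A := L (cu z)) (B := L (cu u0))) => t t0.
  have Ot : O ((z.1, evals xs z.2), coupling z - t).
    split=> /=; [exact: Uz|by move=> i; rewrite subrr normr0|].
    by change (coupling z - t < r); rewrite ltrBlDr (lt_le_trans zr) // lerDl.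
  have := Lsep _ _ Ot (C_cu Tu0); rewrite /cu !Leval //; first lra.
  by have [] := gT Tu0.
have [d d0 Od] := O_absorbing (cu u0 - cu z).
exists Lx, a, lam, d; split=> // u Tu; have [hu _] := gT Tu.
have := Lsep _ _ Od (C_cu Tu); rewrite linear_formD // linear_formZ // /cu !Leval //.
by have := ler_wpM2l (ltW d0) Lc0; lra.
Qed.

End FiniteDimensionalSeparation.

Lemma lsc_convex_separation {R : realType} {X : tvsType R} (g : X * (X -> R) -> \bar R)
    (T : set (X * (X -> R))) z :
  lsc_Z g -> convex_fun_Z g -> (forall u, T u -> Zd u /\ (g u <= (coupling u)%:E)%E) ->
  T !=set0 -> Zd z -> ((coupling z)%:E < g z)%E ->
  exists Lx a, exists lam d : R, [/\ dual Lx, 0 <= lam, 0 < d &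
    forall u, T u -> Lx z.1 + z.2 a + d <= Lx u.1 + u.2 a + lam * (coupling u - coupling z)].
Proof.
move=> hl hc gT [u0 Tu0] hz hgz.
have [r [zr rg]] : exists r, coupling z < r /\ (r%:E < g z)%E.
  move: hgz; case: (g z) => [y| |] //; last by exists (coupling z + 1); rewrite ltry; lra.
  by rewrite lte_fin => zy; exists ((coupling z + y) / 2); rewrite lte_fin; split; lra.
have [U [hU [xs [eps [eps0 hlsc]]]]] := hl z hz r rg.
have [V [oV Vz cV VU]] := nbhs_convex_open hU.
have hV y h : V y -> dual h -> (forall a, a \in xs -> `|h a - z.2 a| < eps) ->
    (r%:E < g (y, h))%E by move=> Vy; apply: hlsc; exact: VU.
exact: (finite_dimensional_separation hc gT hz zr oV cV Vz eps0 hV Tu0).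
Qed.

Section ConvexHull.
Context {R : realType} {X : tvsType R}.
Local Notation Z := (X * (X -> R))%type.
Implicit Types (T : set Z) (z w u : Z).

Lemma phi_lsc T : operator T -> lsc_Z (phi T).
Proof.
move=> Top z hz r /phi_gtP[u Tu hu].
pose e := (fitz_term z u - r) / 2.
have e0 : 0 < e by rewrite divr_gt0 // subr_gt0.
exists [set y | `|u.2 z.1 - u.2 y| < e]; split.
  by have := (Top u Tu).2 z.1; move/cvgrPdist_lt => /(_ e e0).
exists [:: u.1], e; split=> // y f hy hf hxs.
apply: lt_le_trans (fitz_term_le_phi _ Tu); rewrite lte_fin.
have := hxs u.1 (mem_head _ _); move: hy; rewrite /fitz_term /= !ltr_norml.
by move=> /andP[_ h1] /andP[h2 _]; rewrite /e /fitz_term in e0 h1 h2; lra.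
Qed.

Lemma phi_convex T : operator T -> convex_fun_Z (phi T).
Proof.
move=> Top z w hz hw a b /phi_leP ha /phi_leP hb t /andP[t0 t1].
apply/phi_leP => u Tu; have hu := Top u Tu.
have -> : fitz_term (zcomb t z w) u = t * fitz_term z u + (1 - t) * fitz_term w u.
  by rewrite /fitz_term /zcomb /= dualDZ //; ring.
have t1' : 0 <= 1 - t by rewrite subr_ge0.
by have := ler_wpM2l t0 (ha u Tu); have := ler_wpM2l t1' (hb u Tu); lra.
Qed.

Lemma phi_le_c_plus_ind T : monotone_op T -> forall w, Zd w ->
  (phi T w <= c_plus_ind T w)%E.
Proof.
move=> Tmon w hw; rewrite /c_plus_ind; case: asboolP => [Tw|_]; last exact: leey.
apply/phi_leP => u Tu; rewrite fitz_termE.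
have gap0 : 0 <= mono_gap w u := Tmon w u Tw Tu.
lra.
Qed.

Lemma phi_le_psi T : MX T -> forall z, (phi T z <= psi T z)%E.
Proof.
move=> [Top [_ Tmon]] z; apply: ereal_sup_ubound; exists (phi T) => //.
by split; [exact: phi_lsc|split; [exact: phi_convex|exact: phi_le_c_plus_ind]].
Qed.

Lemma NI_no_uniform_gap_shift T z w (d : R) : operator T ->
  (forall v, Zd v -> ((coupling v)%:E <= phi T v)%E) ->
  Zd z -> (forall u, T u -> 0 <= mono_gap z u) -> Zd w -> 0 < d ->
  (forall u, T u -> mono_gap z w + d <= mono_gap w u) -> False.
Proof.
move=> Top hNI hz Hz hw d0 hd; set q := mono_gap z w in hd.
have Q0 : 0 < `|q| + d by rewrite ltr_wpDl.
(* For p := (1 - s) z + s w, mono_gap p u >= s d + s^2 q >= s d / 2. *)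
pose s := d / (2 * (`|q| + d)).
have s0 : 0 < s by rewrite divr_gt0 // mulr_gt0.
have sq : s * `|q| + s * d = d / 2 by rewrite -mulrDr /s; field; rewrite gt_eqF.
have s1 : s <= 1.
  by rewrite -(ler_pM2r d0) mul1r; have := mulr_ge0 (ltW s0) (normr_ge0 q); lra.
have s1' : 0 <= 1 - s by rewrite subr_ge0.
apply: (NI_no_uniform_gap (hNI _ (Zd_comb (1 - s) hz hw)) (_ : 0 < s * d / 2)).
  by rewrite divr_gt0 // mulr_gt0.
move=> u Tu; rewrite mono_gap_comb //; last exact: Top.
rewrite (_ : 1 - (1 - s) = s) -/q; last by ring.
have h1 := mulr_ge0 s1' (Hz u Tu).
have h2 := ler_wpM2l (ltW s0) (hd u Tu).
have h3 : s * s * - `|q| <= s * s * q.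
  apply: ler_wpM2l; first by rewrite mulr_ge0 // ltW.
  by rewrite lerNl -normrN ler_norm.
have h4 : s * (s * `|q|) <= s * (d / 2).
  by apply: ler_wpM2l; [exact: ltW|have := mulr_ge0 (ltW s0) (ltW d0); lra].
lra.
Qed.

Lemma NI_no_affine_separation T z Lx a (lam d : R) : operator T ->
  (forall v, Zd v -> ((coupling v)%:E <= phi T v)%E) ->
  Zd z -> (forall u, T u -> 0 <= mono_gap z u) ->
  dual Lx -> 0 <= lam -> 0 < d ->
  (forall u, T u -> Lx z.1 + z.2 a + d <= Lx u.1 + u.2 a + lam * (coupling u - coupling z)) ->
  False.
Proof.
move=> Top hNI hz Hz hLx lam0 d0 hsep.
(* The separating functional becomes a point w of Z, namely z - (a, Lx) or
   -(a, Lx) / lam, whose gaps with T exceed its gap with z uniformly. *)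
have [lam_eq0|lam_neq0] := eqVneq lam 0.
  rewrite {}lam_eq0 in hsep; pose w : Z := (z.1 - a, fun x => 1 * z.2 x + (-1) * Lx x).
  apply: (@NI_no_uniform_gap_shift T z w d Top hNI hz Hz (dual_comb _ _ hz hLx) d0).
  move=> u Tu.
  have lu := dual_linear_form (Top u Tu).
have lz := dual_linear_form hz; have lx := dual_linear_form hLx.
  have := hsep u Tu; have := Hz u Tu.
  by rewrite /mono_gap /= !linear_formB //; lra.
have lam_pos : 0 < lam by rewrite lt_def lam_neq0 lam0.
have k0 : 0 < lam^-1 by rewrite invr_gt0.
pose w : Z := (lam^-1 *: - a, fun x => (- lam^-1) * Lx x + 0 * Lx x).
apply: (@NI_no_uniform_gap_shift T z w (lam^-1 * d) Top hNI hz Hz (dual_comb _ _ hLx hLx)).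
  exact: mulr_gt0.
move=> u Tu; rewrite [mono_gap w u]mono_gapC.
have lu := dual_linear_form (Top u Tu).
have lz := dual_linear_form hz; have lx := dual_linear_form hLx.
have := ler_wpM2l (ltW k0) (hsep u Tu).
rewrite [X in _ <= X]mulrDr mulrA mulVf ?gt_eqF // mul1r !mulrDr.
by rewrite /mono_gap /coupling /= !linear_formZ // !linear_formN //; lra.
Qed.

Lemma psi_le_coupling T z : MX T -> locally_NI T -> set_phi_le_c T z ->
  (psi T z <= (coupling z)%:E)%E.
Proof.
move=> hT hNI /set_phi_le_cP[hz Hz]; apply: ge_ereal_sup => _ [g [hl [hc hi]] <-].
rewrite leNgt; apply/negP => hgz.
have gT u : T u -> Zd u /\ (g u <= (coupling u)%:E)%E.
  by move=> Tu; have hu := hT.1 u Tu; split=> //; have := hi u hu; rewrite /c_plus_ind asboolT.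
have [Lx [a [lam [d [hLx lam0 d0 hsep]]]]] := lsc_convex_separation hl hc gT hT.2.1 hz hgz.
exact: NI_no_affine_separation hT.1 (locally_NI_NI hT hNI) hz Hz hLx lam0 d0 hsep.
Qed.

End ConvexHull.

Section MainResults.
Context {R : realType} {X : tvsType R}.
Variable T : set (X * (X -> R)).
Hypotheses (hT : MX T) (hNI : locally_NI T).

Lemma set_phi_eq_c_le_c : set_phi_eq_c T = set_phi_le_c T.
Proof.
apply/seteqP; split=> z [hz h]; split=> //; first by rewrite h.
by apply/eqP; rewrite eq_le h locally_NI_NI.
Qed.

Lemma set_phi_le_c_psi_eq_c : set_phi_le_c T = set_psi_eq_c T.
Proof.
apply/seteqP; split=> z hM; have [hz _] := hM; split=> //; last first.
  by case: hM => _ <-; exact: phi_le_psi.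
apply/eqP; rewrite eq_le psi_le_coupling //=.
exact: le_trans (locally_NI_NI hT hNI hz) (phi_le_psi hT z).
Qed.

Lemma set_phi_le_c_MX : MX (set_phi_le_c T).
Proof.
split; first by move=> z [].
split; last exact: set_phi_le_c_monotone.
by have [_ [[u Tu] _]] := hT; exists u; exact: MX_subset_phi_le_c.
Qed.

End MainResults.

Theorem theorem3p8 (R : realType) (X : tvsType R)
  (hX : hausdorff_space X) (hnt : exists x : X, x != 0)
  (T : set (X * (X -> R))) (hT : MX T) (hNI : locally_NI T) :
  set_phi_eq_c T = set_phi_le_c T /\
  set_phi_le_c T = set_psi_eq_c T /\
  (MX (set_phi_eq_c T) /\ T `<=` set_phi_eq_c T /\
   identifiable (set_phi_eq_c T) /\
   forall S : set (X * (X -> R)),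
     MX S -> T `<=` S -> identifiable S -> S = set_phi_eq_c T).
Proof.
rewrite set_phi_eq_c_le_c //; split=> //; split; first exact: set_phi_le_c_psi_eq_c.
split; first exact: set_phi_le_c_MX.
split; first exact: MX_subset_phi_le_c.
split; first exact: set_phi_le_c_identifiable.
by move=> S hS TS hid; exact: set_phi_le_c_unique.
Qed.
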